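(* Fix $j\ge0$. Let $f_j(z)$, $g_j(z)$, $h_j(z)$ be the generating functions, in which $z^n$ marks paths of length $n$, of the following partial Dyck paths ending at height $j$: <ul> <li>$f_j$: all descents have odd length, and the path either ends with an up-step or is the empty path (the empty path only when $j=0$);</li> <li>$g_j$: the path ends with a down-step, its last descent has odd length, and all earlier descents have odd length;</li> <li>$h_j$: the path ends with a down-step, its last descent has even length, and all earlier descents have odd length.</li> </ul> Then $f_0=1$, $f_j=v_1^{-j}$ for $j\ge1$, and for all $j\ge0$ $$g_j=\frac{z(1+h_0)}{v_1^{\,j+1}},\qquad h_j=\frac{z\,g_0}{v_1^{\,j+1}},$$ where $$g_0=\frac{z v_1}{v_1^2-z^2},\qquad h_0=\frac{z^2}{v_1^2-z^2}.$$ Equivalently, in terms of the bivariate series, one has $\sum_{j\ge0}f_ju^j=1-\frac{u}{u-v_1}$, $\sum_{j\ge0}g_ju^j=\frac{-z(1+h_0)}{u-v_1}$ and $\sum_{j\ge0}h_ju^j=\frac{-zg_0}{u-v_1}$.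
   Context: A partial Dyck path (prefix of a Dyck path) is a finite sequence of up-steps $(1,1)$ and down-steps $(1,-1)$ starting at height $0$ and never going below height $0$; its length is its number of steps. A descent is a maximal run of consecutive down-steps; its length is the number of down-steps in it. Let $v_1=v_1(z)$ denote the unique root $u$ of the cubic $$z u^3+(z^2-1)u^2-z^3u+z^2=0$$ which is a Laurent series in $z$ with $z\,v_1(z)\to1$ as $z\to0$. Its expansion begins $v_1=\frac1z-z-z^5-2z^7-\cdots$. *)

From HB Require Import structures.
From mathcomp Require Import all_boot all_order all_algebra.
Set Implicit Arguments. Unset Strict Implicit. Unset Printing Implicit Defensive.
Import Order.TTheory GRing.Theory Num.Theory.

(* Partial Dyck paths: a path is a seq bool, true = up-step (1,1),     *)
(* false = down-step (1,-1).                                           *)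

Fixpoint hgt_from (h : nat) (s : seq bool) : option nat :=
  match s with
  | [::] => Some h
  | true :: s' => hgt_from h.+1 s'
  | false :: s' => if h is h'.+1 then hgt_from h' s' else None
  end.

Definition pdyck_ending (j : nat) (s : seq bool) : bool := hgt_from 0 s == Some j.

Fixpoint desc_aux (cur : nat) (s : seq bool) : seq nat :=
  match s with
  | [::] => if cur is 0 then [::] else [:: cur]
  | true :: s' => (if cur is 0 then [::] else [:: cur]) ++ desc_aux 0 s'
  | false :: s' => desc_aux cur.+1 s'
  end.
Definition descents (s : seq bool) : seq nat := desc_aux 0 s.

Definition f_prop (s : seq bool) : bool :=
  all odd (descents s) && ((s == [::]) || last false s).

Definition ends_down (s : seq bool) : bool := ~~ last true s.

Definition g_prop (s : seq bool) : bool :=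
  let ds := descents s in
  [&& ends_down s, odd (last 0%N ds) & all odd (take (size ds).-1 ds)].

Definition h_prop (s : seq bool) : bool :=
  let ds := descents s in
  [&& ends_down s, ~~ odd (last 0%N ds) & all odd (take (size ds).-1 ds)].

Definition npaths (P : seq bool -> bool) (j n : nat) : nat :=
  #|[set t : n.-tuple bool | pdyck_ending j t && P t]|.

Local Open Scope ring_scope.

Definition fps := nat -> rat.

Definition fconst (c : rat) : fps := fun n => if n is 0%N then c else 0.
Definition fone : fps := fconst 1.
Definition fX : fps := fun n => (n == 1%N)%:R.
Definition fadd (a b : fps) : fps := fun n => a n + b n.
Definition fopp (a : fps) : fps := fun n => - a n.
Definition fmul (a b : fps) : fps := fun n => \sum_(i < n.+1) a i * b (n - i)%N.
Definition fpow (a : fps) (k : nat) : fps := iter k (fmul a) fone.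

(* multiplicative inverse of a series with nonzero constant term *)
Fixpoint finv_list (a : fps) (n : nat) : seq rat :=
  match n with
  | 0%N => [:: (a 0%N)^-1]
  | n'.+1 => let l := finv_list a n' in
      rcons l (- (a 0%N)^-1 * \sum_(i < n'.+1) a i.+1 * nth 0 l (n' - i)%N)
  end.
Definition finv (a : fps) : fps := fun n => nth 0 (finv_list a n) n.

Definition fGF (j : nat) : fps := fun n => (npaths f_prop j n)%:R.
Definition gGF (j : nat) : fps := fun n => (npaths g_prop j n)%:R.
Definition hGF (j : nat) : fps := fun n => (npaths h_prop j n)%:R.

(* Formal Laurent series: (k, a) represents z^(-k) * a.                *)
(* Equality of Laurent series is the relation leqv.                    *)
Definition laurent := (nat * fps)%type.

Definition lemb (a : fps) : laurent := (0%N, a).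
Definition lz : laurent := lemb fX.
Definition lone : laurent := lemb fone.
Definition lzero : laurent := lemb (fconst 0).
Definition lmul (x y : laurent) : laurent := ((x.1 + y.1)%N, fmul x.2 y.2).
Definition ladd (x y : laurent) : laurent :=
  ((x.1 + y.1)%N, fadd (fmul (fpow fX y.1) x.2) (fmul (fpow fX x.1) y.2)).
Definition lopp (x : laurent) : laurent := (x.1, fopp x.2).
Definition lsub (x y : laurent) : laurent := ladd x (lopp y).
Definition lpow (x : laurent) (k : nat) : laurent := iter k (lmul x) lone.
(* inverse; this is the true inverse whenever the representative's series
   has nonzero constant term, which is the case for every use below *)
Definition linv (x : laurent) : laurent := (0%N, fmul (fpow fX x.1) (finv x.2)).
Definition ldiv (x y : laurent) : laurent := lmul x (linv y).
Definition leqv (x y : laurent) : Prop :=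
  forall n, fmul (fpow fX y.1) x.2 n = fmul (fpow fX x.1) y.2 n.

(* the Laurent series z^(-1) * V; with V 0 = 1 this is exactly a Laurent
   series u with z*u -> 1 as z -> 0 *)
Definition lv1 (V : fps) : laurent := (1%N, V).

Definition cubic (u : laurent) : laurent :=
  ladd (ladd (lmul lz (lpow u 3))
             (lmul (lsub (lpow lz 2) lone) (lpow u 2)))
       (ladd (lopp (lmul (lpow lz 3) u)) (lpow lz 2)).

From HB Require Import structures.
From mathcomp Require Import all_boot all_order all_algebra.
From Stdlib Require Import Ring FunctionalExtensionality.
Set Implicit Arguments. Unset Strict Implicit. Unset Printing Implicit Defensive.
Import GRing.Theory.

(* Read a path step by step with a four-state automaton: [Climbing] (empty or
   last step up), [OddRun] / [EvenRun] (inside a final descent of odd / even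
   length), [Dead] (some earlier descent is even).  Deleting the last step shows
   that, with [z] marking length,
     f_0 = 1,  f_(j+1) = z (f_j + g_j),  g_j = z (f_(j+1) + h_(j+1)),  h_j = z g_(j+1),
   and this system determines all coefficients.  Put w = 1/v1 = z/V.  The cubic
   for v1 says w = z + z^2 w / (1 - z^2 w^2), and with
   g_0 = z w / (1 - z^2 w^2), h_0 = z^2 w^2 / (1 - z^2 w^2) one checks that
   f_j = w^j, g_j = z (1 + h_0) w^(j+1), h_j = z g_0 w^(j+1) solve the system. *)

(** * Descents and the state of a path *)

Definition nonzero_seq (r : nat) : seq nat := if r is 0 then [::] else [:: r].

Fixpoint trailing_run (cur : nat) (s : seq bool) : nat :=
  match s with
  | [::] => cur
  | true :: s' => trailing_run 0 s'
  | false :: s' => trailing_run cur.+1 s'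
  end.

Fixpoint closed_descents (cur : nat) (s : seq bool) : seq nat :=
  match s with
  | [::] => [::]
  | true :: s' => nonzero_seq cur ++ closed_descents 0 s'
  | false :: s' => closed_descents cur.+1 s'
  end.

Lemma desc_auxE cur s :
  desc_aux cur s = closed_descents cur s ++ nonzero_seq (trailing_run cur s).
Proof.
elim: s cur => [|[] s IHs] cur /=; first by case: cur.
  by rewrite IHs catA.
by rewrite IHs.
Qed.

Lemma trailing_run_rcons cur s b :
  trailing_run cur (rcons s b) = if b then 0 else (trailing_run cur s).+1.
Proof. by elim: s cur => [|[] s IHs] cur /=; [case: b | rewrite IHs ..]. Qed.

Lemma closed_descents_rcons cur s b :
  closed_descents cur (rcons s b) =
  closed_descents cur s ++ (if b then nonzero_seq (trailing_run cur s) else [::]).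
Proof.
elim: s cur => [|[] s IHs] cur /=; first by case: b; case: cur.
  by rewrite IHs catA.
by rewrite IHs.
Qed.

Inductive dstate := Climbing | OddRun | EvenRun | Dead.

(* Transparent, so that [==] on states computes. *)
Lemma dstate_eq_dec : comparable dstate.
Proof. by move=> x y; rewrite /decidable; decide equality. Defined.

HB.instance Definition _ := comparableMixin dstate_eq_dec.

Definition dstate_of (s : seq bool) : dstate :=
  if all odd (closed_descents 0 s) then
    if trailing_run 0 s is r.+1 then (if odd r then EvenRun else OddRun)
    else Climbing
  else Dead.

Definition dstep (st : dstate) (b : bool) : dstate :=
  match st, b with
  | Climbing, true | OddRun, true => Climbing
  | Climbing, false | EvenRun, false => OddRun
  | OddRun, false => EvenRun
  | _, _ => Dead
  end.

Lemma dstate_of_rcons s b : dstate_of (rcons s b) = dstep (dstate_of s) b.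
Proof.
rewrite /dstate_of trailing_run_rcons closed_descents_rcons.
case: b; rewrite ?cats0 ?all_cat; case: (all odd _) => //=.
by case: (trailing_run 0 s) => [|r] //=; rewrite andbT; case: (odd r).
by case: (trailing_run 0 s) => [|r] //=; case: (odd r).
Qed.

Lemma trailing_run_eq0 s : (trailing_run 0 s == 0) = (s == [::]) || last false s.
Proof.
elim/last_ind: s => [|s b _] //.
by rewrite trailing_run_rcons last_rcons -cats1; case: s; case: b.
Qed.

Lemma ends_downE s : ends_down s = (trailing_run 0 s != 0).
Proof.
elim/last_ind: s => [|s b _] //.
by rewrite /ends_down last_rcons trailing_run_rcons; case: b.
Qed.

Lemma f_propE s : f_prop s = (dstate_of s == Climbing).
Proof.
rewrite /f_prop /descents desc_auxE -trailing_run_eq0 /dstate_of all_cat.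
case: (all odd _); case: (trailing_run 0 s) => [|r] //=.
by case: (odd r).
Qed.

Lemma last_take_cats1 (l : seq nat) x :
  (last 0 (l ++ [:: x]) = x) * (take (size (l ++ [:: x])).-1 (l ++ [:: x]) = l).
Proof. by rewrite cats1 last_rcons size_rcons /= -cats1 take_size_cat. Qed.

Lemma g_propE s : g_prop s = (dstate_of s == OddRun).
Proof.
rewrite /g_prop /descents desc_auxE ends_downE /dstate_of.
case: (trailing_run 0 s) => [|r] /=; first by case: (all odd _).
by rewrite !last_take_cats1 /=; case: (all odd _); case: (odd r).
Qed.

Lemma h_propE s : h_prop s = (dstate_of s == EvenRun).
Proof.
rewrite /h_prop /descents desc_auxE ends_downE /dstate_of.
case: (trailing_run 0 s) => [|r] /=; first by case: (all odd _).
by rewrite !last_take_cats1 /=; case: (all odd _); case: (odd r).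
Qed.

(** * Counting paths by their last step *)

Lemma hgt_from_rcons h s b : hgt_from h (rcons s b) =
  if hgt_from h s is Some k then
    (if b then Some k.+1 else if k is k'.+1 then Some k' else None)
  else None.
Proof.
elim: s h => [|[] s IHs] h /=; first by case: b; case: h.
  exact: IHs.
by case: h.
Qed.

Lemma pdyck_ending_rcons_up j s :
  pdyck_ending j (rcons s true) = (0 < j) && pdyck_ending j.-1 s.
Proof.
by rewrite /pdyck_ending hgt_from_rcons; case: (hgt_from 0 s) => [k|]; case: j.
Qed.

Lemma pdyck_ending_rcons_down j s :
  pdyck_ending j (rcons s false) = pdyck_ending j.+1 s.
Proof. by rewrite /pdyck_ending hgt_from_rcons; case: (hgt_from 0 s) => [[|k]|]. Qed.

Fixpoint bool_seqs (n : nat) : seq (seq bool) :=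
  if n is m.+1 then
    [seq rcons s true | s <- bool_seqs m] ++ [seq rcons s false | s <- bool_seqs m]
  else [:: [::]].

Lemma mem_map_rcons (l : seq (seq bool)) s b c :
  (rcons s b \in [seq rcons x c | x <- l]) = (b == c) && (s \in l).
Proof.
apply/mapP/andP => [[x xl] /rcons_inj [-> ->] //| [/eqP -> sl]].
by exists s.
Qed.

Lemma mem_bool_seqs n s : (s \in bool_seqs n) = (size s == n).
Proof.
elim: n s => [|n IHn] s; first by rewrite inE size_eq0.
case/lastP: s => [|s b]; rewrite mem_cat.
  by apply/negbTE; rewrite negb_or; apply/andP; split; apply/mapP => -[[]].
by rewrite !mem_map_rcons IHn size_rcons eqSS; case: b; rewrite ?orbF.
Qed.

Lemma uniq_bool_seqs n : uniq (bool_seqs n).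
Proof.
elim: n => [|n IHn] //=.
rewrite cat_uniq !map_inj_uniq ?IHn ?andbT /=; try exact: rcons_injl.
by apply/hasPn => x /mapP [y _ ->]; rewrite mem_map_rcons.
Qed.

Lemma card_tuples_count (P : pred (seq bool)) n :
  #|[set t : n.-tuple bool | P t]| = count P (bool_seqs n).
Proof.
rewrite cardsE cardE /enum_mem size_filter.
transitivity (count P (map val (enum {: n.-tuple bool}))).
  by rewrite count_map enumT; apply: eq_count.
apply/permP/uniq_perm; rewrite ?uniq_bool_seqs ?(map_inj_uniq val_inj) ?enum_uniq //.
move=> s; rewrite mem_bool_seqs; apply/mapP/idP => [[t _ ->] | /eqP Hs].
  by rewrite size_tuple.
by exists (Tuple (introT eqP Hs)); rewrite ?mem_enum.
Qed.

Definition nstate (st : dstate) (j n : nat) : nat :=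
  count (fun s => pdyck_ending j s && (dstate_of s == st)) (bool_seqs n).

Lemma npaths_count P j n :
  npaths P j n = count (fun s => pdyck_ending j s && P s) (bool_seqs n).
Proof. exact: (card_tuples_count (fun s => pdyck_ending j s && P s)). Qed.

Lemma npaths_nstate j n :
  [/\ npaths f_prop j n = nstate Climbing j n,
      npaths g_prop j n = nstate OddRun j n &
      npaths h_prop j n = nstate EvenRun j n].
Proof.
by split; rewrite npaths_count; apply: eq_count => s;
  rewrite ?f_propE ?g_propE ?h_propE.
Qed.

Lemma nstate0 st j : nstate st j 0 = (j == 0) && (st == Climbing).
Proof. by rewrite /nstate /= addn0 /pdyck_ending; case: j; case: st. Qed.

Lemma nstateS st j n : nstate st j n.+1 =
  count (fun s => (0 < j) && pdyck_ending j.-1 s && (dstep (dstate_of s) true == st))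
        (bool_seqs n) +
  count (fun s => pdyck_ending j.+1 s && (dstep (dstate_of s) false == st))
        (bool_seqs n).
Proof.
rewrite /nstate count_cat !count_map; congr (_ + _); apply: eq_count => s /=.
  by rewrite pdyck_ending_rcons_up dstate_of_rcons.
by rewrite pdyck_ending_rcons_down dstate_of_rcons.
Qed.

Lemma count_disjointU (T : Type) (a1 a2 : pred T) l :
  (forall x, ~~ (a1 x && a2 x)) -> count (predU a1 a2) l = count a1 l + count a2 l.
Proof.
move=> a12; rewrite -count_predUI (@eq_count _ (predI a1 a2) pred0) ?count_pred0 ?addn0 //.
by move=> x /=; apply/negbTE/a12.
Qed.

Lemma nstate_climbing0S n : nstate Climbing 0 n.+1 = 0.
Proof.
by rewrite nstateS !(@eq_count _ _ pred0) ?count_pred0 // => s; case: (dstate_of s);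
  rewrite /= ?andbF.
Qed.

Lemma nstate_climbingSS j n :
  nstate Climbing j.+1 n.+1 = nstate Climbing j n + nstate OddRun j n.
Proof.
rewrite nstateS [X in _ + X](@eq_count _ _ pred0) ?count_pred0 ?addn0; last first.
  by move=> s; case: (dstate_of s); rewrite /= ?andbF.
rewrite /nstate -count_disjointU; last by move=> s; case: (dstate_of s); rewrite /= ?andbF.
by apply: eq_count => s /=; case: (dstate_of s); rewrite /= ?andbF ?orbF.
Qed.

Lemma nstate_oddS j n :
  nstate OddRun j n.+1 = nstate Climbing j.+1 n + nstate EvenRun j.+1 n.
Proof.
rewrite nstateS (@eq_count _ _ pred0) ?count_pred0 ?add0n; last first.
  by move=> s; case: (dstate_of s); rewrite /= ?andbF.
rewrite /nstate -count_disjointU; last by move=> s; case: (dstate_of s); rewrite /= ?andbF.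
by apply: eq_count => s /=; case: (dstate_of s); rewrite /= ?andbF ?orbF.
Qed.

Lemma nstate_evenS j n : nstate EvenRun j n.+1 = nstate OddRun j.+1 n.
Proof.
rewrite nstateS (@eq_count _ _ pred0) ?count_pred0 ?add0n; last first.
  by move=> s; case: (dstate_of s); rewrite /= ?andbF.
by apply: eq_count => s /=; case: (dstate_of s); rewrite /= ?andbF.
Qed.

(** * Formal power series *)

Local Open Scope ring_scope.

Declare Scope fps_scope.
Delimit Scope fps_scope with F.
Arguments fpow a k%_N.
Notation "0" := (fconst 0) : fps_scope.
Notation "1" := fone : fps_scope.
Notation z := fX.
Notation "a + b" := (fadd a b) : fps_scope.
Notation "- a" := (fopp a) : fps_scope.
Notation "a - b" := (fadd a (fopp b)) : fps_scope.
Notation "a * b" := (fmul a b) : fps_scope.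
Notation "a ^ k" := (fpow a k) : fps_scope.

Implicit Types a b c : fps.

Lemma fps_ext (a b : fps) : (forall n, a n = b n) -> a = b.
Proof. exact: functional_extensionality. Qed.

(* [fmul] is polynomial multiplication on truncations; this transfers
   commutativity and associativity from [{poly rat}]. *)
Definition ftrunc (m : nat) (a : fps) : {poly rat} := \poly_(i < m.+1) a i.

Lemma coef_ftrunc m a i : (i <= m)%N -> (ftrunc m a)`_i = a i.
Proof. by move=> le_im; rewrite coef_poly ltnS le_im. Qed.

Lemma fmul_ftrunc m n a b : (n <= m)%N -> (a * b)%F n = (ftrunc m a * ftrunc m b)`_n.
Proof.
move=> le_nm; rewrite coefM; apply: eq_bigr => -[i /= lt_in] _.
rewrite !coef_ftrunc //; first by rewrite (leq_trans (leq_subr _ _)).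
by rewrite (leq_trans _ le_nm) // -ltnS.
Qed.

Lemma coefM_eq n (p p' q q' : {poly rat}) :
  (forall i, (i <= n)%N -> p`_i = p'`_i) -> (forall i, (i <= n)%N -> q`_i = q'`_i) ->
  (p * q)`_n = (p' * q')`_n.
Proof.
move=> pp' qq'; rewrite !coefM; apply: eq_bigr => -[i /= lt_in] _.
by rewrite pp' // qq' // leq_subr.
Qed.

Lemma fmulC a b : (a * b = b * a)%F.
Proof. by apply: fps_ext => n; rewrite !(@fmul_ftrunc n) // mulrC. Qed.

Lemma fmulA a b c : (a * (b * c) = a * b * c)%F.
Proof.
apply: fps_ext => n; rewrite !(@fmul_ftrunc n) //.
have trunc_fmul x y i :
    (i <= n)%N -> (ftrunc n (x * y)%F)`_i = (ftrunc n x * ftrunc n y)`_i.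
  by move=> le_in; rewrite coef_ftrunc // (@fmul_ftrunc n).
rewrite (@coefM_eq n _ (ftrunc n a) _ (ftrunc n b * ftrunc n c)) //; last exact: trunc_fmul.
rewrite [RHS](@coefM_eq n _ (ftrunc n a * ftrunc n b) _ (ftrunc n c)) ?mulrA //.
exact: trunc_fmul.
Qed.

Lemma fmul1 a : (1 * a = a)%F.
Proof.
apply: fps_ext => n; rewrite /fmul big_ord_recl subn0 mul1r big1 ?addr0 // => i _.
by rewrite mul0r.
Qed.

Lemma fmulDl a b c : ((a + b) * c = a * c + b * c)%F.
Proof.
apply: fps_ext => n; rewrite /fmul /fadd -big_split; apply: eq_bigr => i _.
by rewrite mulrDl.
Qed.

Lemma fps_ring :
  ring_theory (fconst 0) fone fadd fmul (fun a b => (a - b)%F) fopp (@eq fps).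
Proof.
constructor => //.
- by move=> a; apply: fps_ext => -[|n]; rewrite /fadd /= add0r.
- by move=> a b; apply: fps_ext => n; rewrite /fadd addrC.
- by move=> a b c; apply: fps_ext => n; rewrite /fadd addrA.
- exact: fmul1.
- exact: fmulC.
- exact: fmulA.
- exact: fmulDl.
- by move=> a; apply: fps_ext => -[|n]; rewrite /fadd /fopp subrr.
Qed.

Lemma fpowS a k : (a ^ k.+1 = a * a ^ k)%F.
Proof. by []. Qed.

Lemma fpowD a m n : (a ^ (m + n) = a ^ m * a ^ n)%F.
Proof.
elim: m => [|m IHm]; first by rewrite fmul1.
by rewrite addSn !fpowS IHm fmulA.
Qed.

Lemma fps_power : power_theory fone fmul (@eq fps) nat_of_bin fpow.
Proof.
constructor => a [|p] //=; elim: p => [p IHp|p IHp|] /=.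
- by rewrite NatTrec.doubleE -addnn fpowD IHp.
- by rewrite NatTrec.doubleE -addnn fpowD IHp.
- by rewrite fmulC fmul1.
Qed.

(* With [fps_power], [ring] expands [a ^ k] for every numeral [k]. *)
Ltac fpow_exponent t :=
  match isnatcst t with
  | false => constr:(InitialRing.NotConstant)
  | _ => constr:(BinNat.N.of_nat t)
  end.

Add Ring fps_ring : fps_ring (power_tac fps_power [fpow_exponent]).

Lemma fmul_coef0 a b : (a * b)%F 0%N = a 0%N * b 0%N.
Proof. by rewrite /fmul big_ord1. Qed.

Lemma fmulX0 a : (z * a)%F 0%N = 0.
Proof. by rewrite fmul_coef0 mul0r. Qed.

Lemma fmulXS a n : (z * a)%F n.+1 = a n.
Proof.
rewrite /fmul !big_ord_recl big1 ?addr0 /=; last by move=> i _; rewrite mul0r.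
by rewrite mul0r add0r mul1r subSS subn0.
Qed.

Lemma fmulX_inj a b : (z * a = z * b)%F -> a = b.
Proof. by move=> eq_ab; apply: fps_ext => n; rewrite -(fmulXS a) -(fmulXS b) eq_ab. Qed.

Lemma fpowX_inj k a b : (z ^ k * a = z ^ k * b)%F -> a = b.
Proof. by elim: k => [|k IHk]; rewrite ?fmul1 // !fpowS -!fmulA => /fmulX_inj. Qed.

Lemma fpowM a b k : ((a * b) ^ k = a ^ k * b ^ k)%F.
Proof. by elim: k => [|k IHk]; rewrite ?fpowS ?IHk /=; ring. Qed.

Lemma fpow_coef0 a k : (a ^ k)%F 0%N = a 0%N ^+ k.
Proof. by elim: k => [|k IHk] //; rewrite fpowS fmul_coef0 IHk exprS. Qed.

Lemma fmulIr a a' b c : (b * c = 1)%F -> (a * b = a' * b)%F -> a = a'.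
Proof.
move=> bc1 eq_ab; transitivity (a * b * c)%F; first by ring [bc1].
by rewrite eq_ab; ring [bc1].
Qed.

Lemma fsub_eq0 a b : (a - b = 0)%F -> a = b.
Proof. by move=> ab0; transitivity (a - b + b)%F; [ring | rewrite ab0; ring]. Qed.

Lemma size_finv_list a n : size (finv_list a n) = n.+1.
Proof. by elim: n => [|n IHn] //=; rewrite size_rcons IHn. Qed.

Lemma nth_finv_list a n k : (k <= n)%N -> nth 0 (finv_list a n) k = finv a k.
Proof.
elim: n => [|n IHn]; first by rewrite leqn0 => /eqP ->.
rewrite leq_eqVlt => /orP[/eqP -> // | lt_kn].
by rewrite /= nth_rcons size_finv_list lt_kn IHn.
Qed.

Lemma finvS a n :
  finv a n.+1 = - (a 0%N)^-1 * \sum_(i < n.+1) a i.+1 * finv a (n - i)%N.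
Proof.
rewrite /finv /= nth_rcons size_finv_list ltnn eqxx; congr (_ * _).
by apply: eq_bigr => i _; rewrite nth_finv_list // leq_subr.
Qed.

Lemma fmulV a : a 0%N != 0 -> (a * finv a = 1)%F.
Proof.
move=> a0; apply: fps_ext => -[|n]; first by rewrite fmul_coef0 /finv /= mulfV.
rewrite /fmul big_ord_recl subn0 finvS mulrA mulrN mulfV // mulN1r.
by rewrite (eq_bigr (fun i : 'I_n.+1 => a i.+1 * finv a (n - i)%N)) ?addNr.
Qed.

Lemma finv_eq a b : a 0%N != 0 -> (a * b = 1)%F -> finv a = b.
Proof.
move=> /fmulV aV1 ab1; apply: (fmulIr ab1).
by transitivity 1%F; [ring [aV1] | ring [ab1]].
Qed.

Lemma finv_fpow a k : a 0%N != 0 -> finv (a ^ k)%F = (finv a ^ k)%F.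
Proof.
move=> a0; apply: finv_eq; first by rewrite fpow_coef0 expf_neq0.
by rewrite -fpowM fmulV //; elim: k => [|k IHk] //; rewrite fpowS IHk fmul1.
Qed.

(** * The generating functions *)

Lemma fGF0 : fGF 0 = 1%F.
Proof.
apply: fps_ext => -[|n]; rewrite /fGF.
  by case: (npaths_nstate 0 0) => -> _ _; rewrite nstate0.
by case: (npaths_nstate 0 n.+1) => -> _ _; rewrite nstate_climbing0S.
Qed.

Lemma fGFS j : fGF j.+1 = (z * (fGF j + gGF j))%F.
Proof.
apply: fps_ext => -[|n]; rewrite ?fmulX0 ?fmulXS /fGF /gGF /fadd.
  by case: (npaths_nstate j.+1 0) => -> _ _; rewrite nstate0.
case: (npaths_nstate j.+1 n.+1) => -> _ _; case: (npaths_nstate j n) => -> -> _.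
by rewrite nstate_climbingSS natrD.
Qed.

Lemma gGFE j : gGF j = (z * (fGF j.+1 + hGF j.+1))%F.
Proof.
apply: fps_ext => -[|n]; rewrite ?fmulX0 ?fmulXS /fGF /gGF /hGF /fadd.
  by case: (npaths_nstate j 0) => _ -> _; rewrite nstate0 andbF.
case: (npaths_nstate j n.+1) => _ -> _; case: (npaths_nstate j.+1 n) => -> _ ->.
by rewrite nstate_oddS natrD.
Qed.

Lemma hGFE j : hGF j = (z * gGF j.+1)%F.
Proof.
apply: fps_ext => -[|n]; rewrite ?fmulX0 ?fmulXS /gGF /hGF.
  by case: (npaths_nstate j 0) => _ _ ->; rewrite nstate0 andbF.
case: (npaths_nstate j n.+1) => _ _ ->; case: (npaths_nstate j.+1 n) => _ -> _.
by rewrite nstate_evenS.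
Qed.

Definition gf_system (F G H : nat -> fps) : Prop :=
  [/\ F 0%N = 1%F,
      forall j, F j.+1 = (z * (F j + G j))%F,
      forall j, G j = (z * (F j.+1 + H j.+1))%F &
      forall j, H j = (z * G j.+1)%F].

Lemma gf_system_GF : gf_system fGF gGF hGF.
Proof. by split; [exact: fGF0 | exact: fGFS | exact: gGFE | exact: hGFE]. Qed.

(* Every right-hand side carries a factor [z], so coefficient [n] of the
   solution only depends on coefficients [< n]. *)
Lemma gf_system_unique F G H F' G' H' :
  gf_system F G H -> gf_system F' G' H' ->
  forall j, [/\ F j = F' j, G j = G' j & H j = H' j].
Proof.
case=> F0 FS GE HE [F'0 F'S G'E H'E].
suff eq_coef n j : [/\ F j n = F' j n, G j n = G' j n & H j n = H' j n].
  by move=> j; split; apply: fps_ext => n; case: (eq_coef n j).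
elim: n j => [|n IHn] j.
  split; rewrite ?HE ?H'E ?GE ?G'E ?fmulX0 //.
  by case: j => [|j]; rewrite ?F0 ?F'0 ?FS ?F'S ?fmulX0.
split.
- case: j => [|j]; first by rewrite F0 F'0.
  by rewrite FS F'S !fmulXS /fadd; case: (IHn j) => -> -> _.
- by rewrite GE G'E !fmulXS /fadd; case: (IHn j.+1) => -> _ ->.
- by rewrite HE H'E !fmulXS; case: (IHn j.+1) => _ -> _.
Qed.

(** * Laurent series and the root [v1] *)

Lemma lpowE x k : lpow x k = ((k * x.1)%N, (x.2 ^ k)%F).
Proof. by elim: k => [|k IHk] //; rewrite /lpow /= -/(lpow x k) IHk /lmul /= mulSn. Qed.

Lemma leqv_lembP a y : (z ^ y.1 * a = y.2)%F -> leqv (lemb a) y.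
Proof. by move=> eq_ay n; rewrite /= eq_ay fmul1. Qed.

Lemma leqv_lzeroP x : leqv x lzero -> x.2 = 0%F.
Proof.
move=> eq_x0; apply: fps_ext => n; move: (eq_x0 n); rewrite /= fmul1 => ->.
by have -> : (z ^ x.1 * 0 = 0)%F by ring.
Qed.

(* The cubic at [u = V/z], multiplied by [z^2]. *)
Lemma cubic_lv1 V : leqv (cubic (lv1 V)) lzero ->
  (V ^ 3 = (1 - z ^ 2) * V ^ 2 + z ^ 4 * V - z ^ 4)%F.
Proof.
move/leqv_lzeroP => cubic0; apply: (@fpowX_inj 4); apply: fsub_eq0; rewrite -cubic0.
rewrite /cubic /lsub /ladd /lmul /lopp /lz /lone /lemb /lv1 !lpowE; cbn [fst snd].
by rewrite !muln0 !muln1 !fpowD; ring.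
Qed.

Section ReciprocalRoot.

Variable V : fps.
Hypothesis V0 : V 0%N = 1.
Hypothesis V_cubic : (V ^ 3 = (1 - z ^ 2) * V ^ 2 + z ^ 4 * V - z ^ 4)%F.

Local Open Scope fps_scope.

(* [vinv = 1/v1 = z/V] and [dinv = v1^2 / (v1^2 - z^2)]; [g0], [h0] are the
   paper's [g_0], [h_0]. *)
Definition vinv : fps := z * finv V.
Definition vden : fps := 1 - z ^ 2 * vinv ^ 2.
Definition dinv : fps := finv vden.
Definition g0 : fps := z * vinv * dinv.
Definition h0 : fps := z ^ 2 * vinv ^ 2 * dinv.

Definition sol_f (j : nat) : fps := vinv ^ j.
Definition sol_g (j : nat) : fps := z * (1 + h0) * vinv ^ j.+1.
Definition sol_h (j : nat) : fps := z * g0 * vinv ^ j.+1.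

Lemma V_mulV : V * finv V = 1.
Proof. by apply: fmulV; rewrite V0 oner_neq0. Qed.

Lemma vden_mulV : vden * dinv = 1.
Proof.
apply: fmulV; rewrite /vden /fadd /fopp fmul_coef0 fpow_coef0.
by rewrite expr0n /= mul0r subr0 oner_neq0.
Qed.

Lemma h0E : h0 = dinv - 1.
Proof. by rewrite -vden_mulV /h0 /vden; ring. Qed.

(* Stated with a monomial left-hand side, so that [ring] can use it as a rewrite rule. *)
Lemma h0_monomial : z ^ 4 * finv V ^ 2 * dinv = dinv - 1.
Proof. by rewrite -h0E /h0 /vinv; ring. Qed.

Lemma finvV_cubic : z ^ 4 * finv V ^ 3 = z ^ 4 * finv V ^ 2 - (z ^ 2 - 1) * finv V - 1.
Proof.
have V3_mulV : V ^ 3 * finv V ^ 3 = 1 by rewrite -fpowM V_mulV; ring.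
by apply: (fmulIr V3_mulV); ring [V_mulV V_cubic].
Qed.

Lemma vinv_fixed : vinv = z + z ^ 2 * dinv * vinv.
Proof.
by apply: (fmulIr vden_mulV); rewrite /vden /vinv; ring [h0_monomial finvV_cubic].
Qed.

Lemma sol_system : gf_system sol_f sol_g sol_h.
Proof.
split=> // j; rewrite /sol_f /sol_g /sol_h !fpowS.
- by rewrite h0E {1}vinv_fixed; ring.
- by rewrite /h0 /g0; ring.
- by rewrite h0E /g0; ring.
Qed.

Lemma gf_solution j : [/\ fGF j = sol_f j, gGF j = sol_g j & hGF j = sol_h j].
Proof. exact: gf_system_unique gf_system_GF sol_system j. Qed.

Lemma hGF0 : hGF 0 = h0.
Proof. by case: (gf_solution 0) => _ _ ->; rewrite /sol_h /h0 /g0; ring. Qed.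

Lemma gGF0 : gGF 0 = g0.
Proof. by case: (gf_solution 0) => _ -> _; rewrite /sol_g h0E /g0; ring. Qed.

Lemma lpow_linv_lv1 j : lpow (linv (lv1 V)) j = (0%N, vinv ^ j).
Proof.
rewrite lpowE /linv /lv1; cbn [fst snd]; rewrite muln0.
by congr (_, _ ^ _); rewrite /vinv; ring.
Qed.

Lemma linv_lpow_lv1 k : linv (lpow (lv1 V) k) = (0%N, vinv ^ k).
Proof.
by rewrite lpowE /linv /= finv_fpow ?V0 ?oner_neq0 // muln1 /vinv fpowM.
Qed.

Lemma linv_lsub_sq :
  linv (lsub (lpow (lv1 V) 2) (lpow lz 2)) = (0%N, z ^ 2 * finv V ^ 2 * dinv).
Proof.
rewrite /linv /lsub /ladd /lopp /lv1 /lz /lemb !lpowE; cbn [fst snd].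
rewrite !muln1 muln0 addn0.
congr (_, _); rewrite (@finv_eq _ (finv V ^ 2 * dinv)); first by ring.
  by rewrite /fadd /fopp !fmul_coef0 !fpow_coef0 V0.
by ring [V_mulV h0_monomial].
Qed.

End ReciprocalRoot.

Theorem mainTheorem3 (V : fps) (HV0 : V 0%N = 1)
  (Hroot : leqv (cubic (lv1 V)) lzero) :
  let v1 := lv1 V in
  (forall n, fGF 0 n = fone n) /\
  (forall j : nat, (0 < j)%N -> leqv (lemb (fGF j)) (lpow (linv v1) j)) /\
  (forall j : nat,
     leqv (lemb (gGF j)) (ldiv (lmul lz (ladd lone (lemb (hGF 0)))) (lpow v1 j.+1))) /\
  (forall j : nat,
     leqv (lemb (hGF j)) (ldiv (lmul lz (lemb (gGF 0))) (lpow v1 j.+1))) /\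
  leqv (lemb (gGF 0)) (ldiv (lmul lz v1) (lsub (lpow v1 2) (lpow lz 2))) /\
  leqv (lemb (hGF 0)) (ldiv (lpow lz 2) (lsub (lpow v1 2) (lpow lz 2))).
Proof.
move=> v1; rewrite {}/v1; have V_cubic := cubic_lv1 Hroot.
have sol j := gf_solution HV0 V_cubic j.
have hGF0_eq := hGF0 HV0 V_cubic; have gGF0_eq := gGF0 HV0 V_cubic.
split; first by rewrite fGF0.
split.
  move=> j _; apply: leqv_lembP; rewrite lpow_linv_lv1; cbn [fst snd].
  by case: (sol j) => -> _ _; rewrite /sol_f; ring.
split.
  move=> j; apply: leqv_lembP; rewrite /ldiv (linv_lpow_lv1 HV0) /lmul /ladd /lone /lz /lemb.
  cbn [fst snd]; rewrite !addn0; case: (sol j) => _ -> _; rewrite hGF0_eq /sol_g; ring.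
split.
  move=> j; apply: leqv_lembP; rewrite /ldiv (linv_lpow_lv1 HV0) /lmul /lz /lemb.
  cbn [fst snd]; rewrite !addn0; case: (sol j) => _ _ ->; rewrite gGF0_eq /sol_h; ring.
split.
  apply: leqv_lembP; rewrite /ldiv (linv_lsub_sq HV0) /lmul /lv1 /lz /lemb; cbn [fst snd].
  have V_mulV := V_mulV HV0.
  by rewrite gGF0_eq /g0 /vinv addn0 add0n; ring [V_mulV].
apply: leqv_lembP; rewrite /ldiv (linv_lsub_sq HV0) /lmul lpowE /lz /lemb; cbn [fst snd].
by rewrite hGF0_eq /h0 /vinv muln0 addn0; ring.
Qed.
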